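(* Let $f,g\in\mathbb{N}^\mathbb{N}$. If $f$ is computably traceable and $g$ is computably traceable relative to $f$, then $g$ is computably traceable.
   Context: For a finite set $\{x_1<\dots<x_n\}\subseteq\mathbb{N}$, its canonical index is $\prod_{i=1}^n p_i^{x_i}$ with $p_i$ the $i$-th prime; $D_m$ denotes the finite set with canonical index $m$. For $h\in\mathbb{N}^\mathbb{N}$, a function $g\in\mathbb{N}^\mathbb{N}$ is computably traceable relative to $h$ if for every nondecreasing unbounded computable function $\varphi:\mathbb{N}\to\mathbb{N}_{\ge1}$ and every function $g'\le_T g$ there is an $h$-computable function $r$ such that for all $n$, $\|D_{r(n)}\|\le\varphi(n)$ and $g'(n)\in D_{r(n)}$ (here $\|\cdot\|$ is cardinality). $g$ is computably traceable if it is computably traceable relative to a computable $h$ (i.e. $r$ can be taken computable). *)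

From mathcomp Require Import all_boot.
Set Implicit Arguments. Unset Strict Implicit. Unset Printing Implicit Defensive.

Inductive code : Type :=
| cZero
| cSucc
| cProj of nat
| cOrc
| cComp of code & seq code
| cRec of code & code                (* primitive recursion on the first argument *)
| cMu of code.                       (* unbounded minimisation on the first argument *)

Inductive eval (h : nat -> nat) : code -> seq nat -> nat -> Prop :=
| eZero args : eval h cZero args 0
| eSucc args : eval h cSucc args (nth 0 args 0).+1
| eProj i args : eval h (cProj i) args (nth 0 args i)
| eOrc args : eval h cOrc args (h (nth 0 args 0))
| eComp f gs args ys y :
    evals h gs args ys -> eval h f ys y -> eval h (cComp f gs) args y
| eRec0 b s rest y : eval h b rest y -> eval h (cRec b s) (0 :: rest) y
| eRecS b s n rest z y :
    eval h (cRec b s) (n :: rest) z -> eval h s (n :: z :: rest) y ->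
    eval h (cRec b s) (n.+1 :: rest) y
| eMu f args y :
    eval h f (y :: args) 0 ->
    (forall z, z < y -> exists v, eval h f (z :: args) v.+1) ->
    eval h (cMu f) args y
with evals (h : nat -> nat) : seq code -> seq nat -> seq nat -> Prop :=
| esNil args : evals h [::] args [::]
| esCons g gs args y ys :
    eval h g args y -> evals h gs args ys -> evals h (g :: gs) args (y :: ys).

Definition comp_rel (h F : nat -> nat) : Prop :=
  exists c : code, forall n, eval h c [:: n] (F n).

Definition computable (F : nat -> nat) : Prop := comp_rel (fun _ => 0) F.

Definition turing_le (g' g : nat -> nat) : Prop := comp_rel g g'.

(* next prime strictly above p (Euclid: some prime lies in (p, p + p!]) *)
Definition next_prime (p : nat) : nat :=
  head 0 [seq q <- iota p.+1 (p`!) | prime q].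

(* nth_prime i = p_(i+1), i.e. nth_prime 0 = 2, nth_prime 1 = 3, ... *)
Fixpoint nth_prime (i : nat) : nat :=
  if i is i'.+1 then next_prime (nth_prime i') else 2.

(* canonical index of the finite set {x_1 < ... < x_n}, given as the strictly
   increasing list [:: x_1; ...; x_n] : prod_{i=1}^n p_i ^ x_i *)
Definition canon_index (s : seq nat) : nat :=
  \prod_(i < size s) nth_prime i ^ nth 0 s i.

(* s (strictly increasing list) is a finite set with canonical index m,
   i.e. s represents D_m *)
Definition is_D (m : nat) (s : seq nat) : Prop :=
  sorted ltn s /\ canon_index s = m.

Definition traceable_rel (h g : nat -> nat) : Prop :=
  forall phi : nat -> nat,
    computable phi ->
    (forall n, 1 <= phi n) ->
    (forall m n, m <= n -> phi m <= phi n) ->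
    (forall b, exists n, b < phi n) ->
    forall g' : nat -> nat, turing_le g' g ->
    exists r : nat -> nat, comp_rel h r /\
      forall n, exists s : seq nat,
        is_D (r n) s /\ size s <= phi n /\ g' n \in s.

Definition traceable (g : nat -> nat) : Prop :=
  exists h : nat -> nat, computable h /\ traceable_rel h g.

From mathcomp Require Import all_boot zify.
Set Implicit Arguments. Unset Strict Implicit. Unset Printing Implicit Defensive.

(* Given an order phi, put psi := isqrt o phi, which is again an order.
   Trace g' <=_T g relative to f with bound psi by some f-computable r; as r
   is f-computable and f is computably traceable, trace r with bound psi by
   an h-computable r2, h computable.  Then g' n lies in the union of the sets
   D_m with m in D_(r2 n) and |D_m| <= psi n, a set of at most
   psi n * psi n <= phi n elements.  Its canonical index is found by an
   unbounded search for an M whose decoding agrees with that union, a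
   primitive recursive test, so the new trace is h-computable. *)

(** * Primitive recursive terms *)

(* Variables are de Bruijn indices into the environment; [tRec n b s]
   iterates [s] on [[:: k, z & env]], [tSum]/[tProd] bind the summation
   index, [tExt c G a] applies a function [G] computed by the code [c], and
   [tAppk f a1 .. ak] runs [f], a term over k variables, on [a1 .. ak]. *)
Inductive tm : Type :=
| tZ | tS of tm | tV of nat
| tRec of tm & tm & tm
| tSum of tm & tm | tProd of tm & tm
| tExt of code & (nat -> nat) & tm
| tApp1 of tm & tm | tApp2 of tm & tm & tm | tApp3 of tm & tm & tm & tm.

Fixpoint sem (t : tm) (e : seq nat) : nat :=
  match t with
  | tZ => 0 | tS a => (sem a e).+1 | tV i => nth 0 e i
  | tRec n b s => iteri (sem n e) (fun k z => sem s [:: k, z & e]) (sem b e)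
  | tSum n b => \sum_(0 <= j < sem n e) sem b (j :: e)
  | tProd n b => \prod_(0 <= j < sem n e) sem b (j :: e)
  | tExt _ G a => G (sem a e)
  | tApp1 f a => sem f [:: sem a e]
  | tApp2 f a b => sem f [:: sem a e; sem b e]
  | tApp3 f a b c => sem f [:: sem a e; sem b e; sem c e]
  end.

Definition cadd : code := cRec (cProj 0) (cComp cSucc [:: cProj 1]).
Definition cmul : code := cRec cZero (cComp cadd [:: cProj 2; cProj 1]).
Definition cprojs (m K : nat) : seq code := map cProj (iota m K).

(* [compile K t] runs on exactly the K variables of the environment of [t]. *)
Fixpoint compile (K : nat) (t : tm) : code :=
  match t with
  | tZ => cZero | tS a => cComp cSucc [:: compile K a] | tV i => cProj i
  | tRec n b s =>
      cComp (cRec (compile K b) (compile K.+2 s)) (compile K n :: cprojs 0 K)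
  | tSum n b => cComp (cRec cZero (cComp cadd
        [:: cComp (compile K.+1 b) (cProj 0 :: cprojs 2 K); cProj 1]))
        (compile K n :: cprojs 0 K)
  | tProd n b => cComp (cRec (cComp cSucc [:: cZero]) (cComp cmul
        [:: cProj 1; cComp (compile K.+1 b) (cProj 0 :: cprojs 2 K)]))
        (compile K n :: cprojs 0 K)
  | tExt c _ a => cComp c [:: compile K a]
  | tApp1 f a => cComp (compile 1 f) [:: compile K a]
  | tApp2 f a b => cComp (compile 2 f) [:: compile K a; compile K b]
  | tApp3 f a b c =>
      cComp (compile 3 f) [:: compile K a; compile K b; compile K c]
  end.

Lemma iteri_sum (F : nat -> nat) N :
  iteri N (fun k z => z + F k) 0 = \sum_(0 <= j < N) F j.
Proof.
elim: N => [|N IH]; first by rewrite big_geq.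
by rewrite iteriS big_nat_recr //= IH.
Qed.

Lemma iteri_prod (F : nat -> nat) N :
  iteri N (fun k z => z * F k) 1 = \prod_(0 <= j < N) F j.
Proof.
elim: N => [|N IH]; first by rewrite big_geq.
by rewrite iteriS big_nat_recr //= IH.
Qed.

Section Compile.
Variable h : nat -> nat.

Fixpoint wf (K : nat) (t : tm) : Prop :=
  match t with
  | tZ => True | tS a => wf K a | tV i => i < K
  | tRec n b s => [/\ wf K n, wf K b & wf K.+2 s]
  | tSum n b => wf K n /\ wf K.+1 b
  | tProd n b => wf K n /\ wf K.+1 b
  | tExt c G a => (forall x, eval h c [:: x] (G x)) /\ wf K a
  | tApp1 f a => wf 1 f /\ wf K a
  | tApp2 f a b => [/\ wf 2 f, wf K a & wf K b]
  | tApp3 f a b c => [/\ wf 3 f, wf K a, wf K b & wf K c]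
  end.

Lemma evals_map_cProj (l : seq nat) e :
  evals h (map cProj l) e (map (nth 0 e) l).
Proof. by elim: l => [|i l IH] /=; constructor => //; constructor. Qed.

Lemma evals_cprojs0 e : evals h (cprojs 0 (size e)) e e.
Proof.
have := evals_map_cProj (iota 0 (size e)) e.
by rewrite [X in evals _ _ _ X](mkseq_nth 0 e).
Qed.

Lemma evals_cprojs2 a b e : evals h (cprojs 2 (size e)) [:: a, b & e] e.
Proof.
have shift x s m n : map (nth 0 (x :: s)) (iota m.+1 n) = map (nth 0 s) (iota m n).
  by elim: n m => [|n IH] m //=; rewrite IH.
have := evals_map_cProj (iota 2 (size e)) [:: a, b & e].
by rewrite !shift [X in evals _ _ _ X](mkseq_nth 0 e).
Qed.

Lemma eval_cadd n x rest : eval h cadd [:: n, x & rest] (x + n).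
Proof.
elim: n => [|n IH]; first by rewrite addn0; apply: eRec0; constructor.
rewrite addnS; apply: (eRecS IH).
by apply: eComp; [constructor; constructor | constructor].
Qed.

Lemma eval_cmul n x rest : eval h cmul [:: n, x & rest] (n * x).
Proof.
elim: n => [|n IH]; first by apply: eRec0; constructor.
rewrite mulSn addnC; apply: (eRecS IH).
apply: eComp; last exact: (eval_cadd _ _ [::]).
by do !constructor.
Qed.

Lemma eval_rec cb cs b (S : nat -> nat -> nat) e N :
  eval h cb e b -> (forall k z, eval h cs [:: k, z & e] (S k z)) ->
  eval h (cRec cb cs) (N :: e) (iteri N S b).
Proof.
move=> Hb Hs; elim: N => [|N IH]; first by constructor.
by rewrite iteriS; apply: eRecS IH (Hs _ _).
Qed.

Lemma eval_compile t K e :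
  wf K t -> size e = K -> eval h (compile K t) e (sem t e).
Proof.
elim: t K e => [|a IHa|i|n IHn b IHb s IHs|n IHn b IHb|n IHn b IHb|c G a IHa
               |f IHf a IHa|f IHf a IHa b IHb|f IHf a IHa b IHb d IHd] K e /=.
- by constructor.
- move=> wa se; apply: eComp; first by constructor; [exact: IHa | constructor].
  by constructor.
- by constructor.
- case=> wn wb ws se; apply: eComp.
    by constructor; [exact: IHn | rewrite -se; apply: evals_cprojs0].
  apply: eval_rec; first exact: IHb.
  by move=> k z; apply: IHs => //=; rewrite se.
- case=> wn wb se; apply: eComp.
    by constructor; [exact: IHn | rewrite -se; apply: evals_cprojs0].
  rewrite -iteri_sum; apply: eval_rec; first by constructor.
  move=> k z; apply: eComp; last exact: (eval_cadd _ _ [::]).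
  constructor; last by do !constructor.
  apply: eComp; last by apply: (IHb K.+1) => //=; rewrite se.
  by constructor; [constructor | rewrite -se; apply: evals_cprojs2].
- case=> wn wb se; apply: eComp.
    by constructor; [exact: IHn | rewrite -se; apply: evals_cprojs0].
  rewrite -iteri_prod; apply: eval_rec.
    by apply: eComp; [do !constructor | constructor].
  move=> k z; apply: eComp; last exact: (eval_cmul _ _ [::]).
  constructor; first by constructor.
  constructor; last by constructor.
  apply: eComp; last by apply: (IHb K.+1) => //=; rewrite se.
  by constructor; [constructor | rewrite -se; apply: evals_cprojs2].
- case=> Hc wa se; apply: eComp; last exact: Hc.
  by constructor; [exact: IHa | constructor].
- case=> wf1 wa se; apply: eComp; last exact: IHf.
  by constructor; [exact: IHa | constructor].
- case=> wf2 wa wb se; apply: eComp; last exact: IHf.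
  by constructor; [exact: IHa | constructor; [exact: IHb | constructor]].
- case=> wf3 wa wb wd se; apply: eComp; last exact: IHf.
  constructor; first exact: IHa.
  by constructor; [exact: IHb | constructor; [exact: IHd | constructor]].
Qed.

Lemma comp_rel_sem t F : wf 1 t -> (forall n, sem t [:: n] = F n) -> comp_rel h F.
Proof.
by move=> wt semF; exists (compile 1 t) => n; rewrite -semF; apply: eval_compile.
Qed.

End Compile.

(** * Arithmetic and bounded logic *)

Definition tOne := tS tZ.

Definition tAdd a b := tApp2 (tRec (tV 1) (tV 0) (tS (tV 1))) a b.
Lemma sem_tAdd a b e : sem (tAdd a b) e = sem a e + sem b e.
Proof. by rewrite /=; elim: (sem b e) => [|n IH]; rewrite ?addn0 ?iteriS ?IH ?addnS. Qed.
Lemma wf_tAdd h K a b : wf h K a -> wf h K b -> wf h K (tAdd a b).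
Proof. by []. Qed.
(* Combinators are made opaque so that [simpl] leaves them to their
   [sem_]/[wf_] lemmas. *)
Opaque tAdd.

Definition tMul a b := tApp2 (tRec (tV 1) tZ (tAdd (tV 1) (tV 2))) a b.
Lemma sem_tMul a b e : sem (tMul a b) e = sem a e * sem b e.
Proof.
rewrite /=; elim: (sem b e) => [|n IH]; first by rewrite muln0.
by rewrite iteriS sem_tAdd /= IH mulnS addnC.
Qed.
Lemma wf_tMul h K a b : wf h K a -> wf h K b -> wf h K (tMul a b).
Proof. by move=> wa wb; split => //; apply: wf_tAdd. Qed.
Opaque tMul.

Definition tPred a := tApp1 (tRec (tV 0) tZ (tV 0)) a.
Lemma sem_tPred a e : sem (tPred a) e = (sem a e).-1.
Proof. by rewrite /=; case: (sem a e) => // n; rewrite iteriS. Qed.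
Opaque tPred.

Definition tSub a b := tApp2 (tRec (tV 1) (tV 0) (tPred (tV 1))) a b.
Lemma sem_tSub a b e : sem (tSub a b) e = sem a e - sem b e.
Proof.
rewrite /=; elim: (sem b e) => [|n IH]; first by rewrite subn0.
by rewrite iteriS sem_tPred /= IH subnS.
Qed.
Lemma wf_tSub h K a b : wf h K a -> wf h K b -> wf h K (tSub a b).
Proof. by []. Qed.
Opaque tSub.

Definition tNot a := tSub tOne a.
Lemma sem_tNot a e : sem (tNot a) e = 1 - sem a e.
Proof. by rewrite sem_tSub. Qed.
Lemma wf_tNot h K a : wf h K a -> wf h K (tNot a).
Proof. by move=> wa; apply: wf_tSub. Qed.
Opaque tNot.

Definition tEq a b := tNot (tAdd (tSub a b) (tSub b a)).
Lemma sem_tEq a b e : sem (tEq a b) e = (sem a e == sem b e).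
Proof.
rewrite sem_tNot sem_tAdd !sem_tSub.
by case: eqP => [->|]; rewrite ?subnn //; move: (sem a e) (sem b e) => x y; lia.
Qed.
Lemma wf_tEq h K a b : wf h K a -> wf h K b -> wf h K (tEq a b).
Proof. by move=> wa wb; apply/wf_tNot/wf_tAdd; apply: wf_tSub. Qed.
Opaque tEq.

Definition tLe a b := tNot (tSub a b).
Lemma sem_tLe a b e : sem (tLe a b) e = (sem a e <= sem b e).
Proof. by rewrite sem_tNot sem_tSub; move: (sem a e) (sem b e) => x y; case: leqP; lia. Qed.
Lemma wf_tLe h K a b : wf h K a -> wf h K b -> wf h K (tLe a b).
Proof. by move=> wa wb; apply/wf_tNot/wf_tSub. Qed.
Opaque tLe.

Definition tLt a b := tLe (tS a) b.
Lemma sem_tLt a b e : sem (tLt a b) e = (sem a e < sem b e).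
Proof. by rewrite sem_tLe. Qed.
Lemma wf_tLt h K a b : wf h K a -> wf h K b -> wf h K (tLt a b).
Proof. exact: wf_tLe. Qed.
Opaque tLt.

Definition tAnd a b := tMul a b.
Lemma sem_tAnd a b e (P Q : bool) :
  sem a e = P -> sem b e = Q -> sem (tAnd a b) e = P && Q.
Proof. by rewrite sem_tMul => -> ->; case: P; case: Q. Qed.
Lemma wf_tAnd h K a b : wf h K a -> wf h K b -> wf h K (tAnd a b).
Proof. exact: wf_tMul. Qed.
Opaque tAnd.

Lemma sum_nat_of_bool_eq0 (s : seq nat) (P : pred nat) :
  (\sum_(j <- s) P j == 0) = ~~ has P s.
Proof. by elim: s => [|x s IH]; rewrite ?big_nil ?big_cons //= addn_eq0 IH; case: (P x). Qed.

Lemma prod_nat_of_bool (s : seq nat) (P : pred nat) :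
  \prod_(j <- s) P j = all P s.
Proof.
elim: s => [|x s IH]; rewrite ?big_nil ?big_cons //= IH.
by case: (P x); rewrite ?mul0n ?mul1n.
Qed.

Definition tEx n b := tNot (tNot (tSum n b)).
Lemma sem_tEx n b e (P : pred nat) : (forall j, sem b (j :: e) = P j) ->
  sem (tEx n b) e = has P (iota 0 (sem n e)).
Proof.
move=> HP; rewrite !sem_tNot /= (eq_bigr (fun j => P j : nat)) // /index_iota subn0.
by rewrite -[has _ _]negbK -sum_nat_of_bool_eq0; case: (\sum_(_ <- _) _).
Qed.
Lemma wf_tEx h K a b : wf h K a -> wf h K.+1 b -> wf h K (tEx a b).
Proof. by move=> wa wb; apply/wf_tNot/wf_tNot. Qed.
Opaque tEx.

Definition tAll n b := tProd n b.
Lemma sem_tAll n b e (P : pred nat) : (forall j, sem b (j :: e) = P j) ->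
  sem (tAll n b) e = all P (iota 0 (sem n e)).
Proof.
move=> HP; rewrite /= (eq_bigr (fun j => P j : nat)) //.
by rewrite /index_iota subn0 prod_nat_of_bool.
Qed.
Lemma wf_tAll h K a b : wf h K a -> wf h K.+1 b -> wf h K (tAll a b).
Proof. by []. Qed.
Opaque tAll.

Definition tIfz c a b := tApp3 (tRec (tV 0) (tV 1) (tV 4)) c a b.
Lemma sem_tIfz c a b e :
  sem (tIfz c a b) e = if sem c e is 0 then sem a e else sem b e.
Proof. by rewrite /=; case: (sem c e) => // n; rewrite iteriS. Qed.
Lemma wf_tIfz h K c a b : wf h K c -> wf h K a -> wf h K b -> wf h K (tIfz c a b).
Proof. by []. Qed.
Opaque tIfz.

Ltac solve_wf := repeat (first
  [ apply: wf_tAdd | apply: wf_tMul | apply: wf_tSub | apply: wf_tNot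
  | apply: wf_tEq | apply: wf_tLe | apply: wf_tLt | apply: wf_tAnd
  | apply: wf_tEx | apply: wf_tAll | apply: wf_tIfz
  | progress rewrite /= | split | done ]).

(** * Primes *)

Definition pow_tm := tRec (tV 1) tOne (tMul (tV 1) (tV 2)).
Lemma sem_pow_tm x y : sem pow_tm [:: x; y] = x ^ y.
Proof. by rewrite /=; elim: y => [|n IH] //; rewrite iteriS sem_tMul /= IH expnS mulnC. Qed.
Lemma wf_pow_tm h : wf h 2 pow_tm.
Proof. by rewrite /pow_tm; solve_wf. Qed.
#[local] Hint Resolve wf_pow_tm : core.
Opaque pow_tm.

Definition fact_tm := tRec (tV 0) tOne (tMul (tV 1) (tS (tV 0))).
Lemma sem_fact_tm n : sem fact_tm [:: n] = n`!.
Proof. by rewrite /=; elim: n => [|n IH] //; rewrite iteriS sem_tMul /= IH factS mulnC. Qed.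
Lemma wf_fact_tm h : wf h 1 fact_tm.
Proof. by rewrite /fact_tm; solve_wf. Qed.
#[local] Hint Resolve wf_fact_tm : core.
Opaque fact_tm.

Lemma dvdn_has d q : (d %| q) = has (fun k => k * d == q) (iota 0 q.+1).
Proof.
apply/idP/hasP => [/dvdnP [k ->]|[k _ /eqP <-]]; last exact: dvdn_mull.
case: d => [|d]; first by exists 0; rewrite ?muln0.
by exists k => //; rewrite mem_iota ltnS leq_pmulr.
Qed.

Definition dvd_tm := tEx (tS (tV 1)) (tEq (tMul (tV 0) (tV 1)) (tV 2)).
Lemma sem_dvd_tm d q : sem dvd_tm [:: d; q] = (d %| q).
Proof.
rewrite (@sem_tEx _ _ _ (fun k => k * d == q)) ?dvdn_has // => j.
by rewrite sem_tEq sem_tMul.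
Qed.
Lemma wf_dvd_tm h : wf h 2 dvd_tm.
Proof. by rewrite /dvd_tm; solve_wf. Qed.
#[local] Hint Resolve wf_dvd_tm : core.
Opaque dvd_tm.

Lemma prime_hasPn q :
  prime q = (1 < q) && ~~ has (fun d => (1 < d) && (d %| q)) (iota 0 q).
Proof.
apply/idP/andP => [pq|[q_gt1 /hasPn nodiv]].
  split; first exact: prime_gt1.
  apply/hasP => -[d]; rewrite mem_iota => /andP [_ dq] /andP [d_gt1 d_q].
  have [_ /(_ d d_q) /orP [] /eqP d_eq] := primeP pq.
    by rewrite d_eq in d_gt1.
  by rewrite d_eq ltnn in dq.
apply/primeP; split => // d dvd.
have := dvdn_leq (ltnW q_gt1) dvd; rewrite leq_eqVlt => /orP [->|dq]; first by rewrite orbT.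
have := nodiv d; rewrite mem_iota /= dq dvd andbT -leqNgt => /(_ isT).
by case: d dvd {nodiv dq} => [|[|d]] //; rewrite dvd0n => /eqP q0; rewrite q0 in q_gt1.
Qed.

Definition prime_tm :=
  tAnd (tLt tOne (tV 0))
       (tNot (tEx (tV 0) (tAnd (tLt tOne (tV 0)) (tApp2 dvd_tm (tV 0) (tV 1))))).
Lemma sem_prime_tm q : sem prime_tm [:: q] = prime q.
Proof.
set D := fun d => (1 < d) && (d %| q).
rewrite prime_hasPn (@sem_tAnd _ _ _ (1 < q) (~~ has D (iota 0 q))) //.
  exact: sem_tLt.
rewrite sem_tNot (@sem_tEx _ _ _ D); first by case: has.
by move=> d; rewrite (@sem_tAnd _ _ _ (1 < d) (d %| q)) ?sem_tLt //= sem_dvd_tm.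
Qed.
Lemma wf_prime_tm h : wf h 1 prime_tm.
Proof. by rewrite /prime_tm; solve_wf. Qed.
#[local] Hint Resolve wf_prime_tm : core.
Opaque prime_tm.

Definition first_prime a l := head 0 [seq q <- iota a l | prime q].

Lemma first_primeS a l : first_prime a l.+1 =
  if first_prime a l is 0 then (if prime (a + l) then a + l else 0)
  else first_prime a l.
Proof.
rewrite /first_prime -addn1 iotaD filter_cat /=.
case E: [seq q <- iota a l | prime q] => [|x s] /=; first by case: prime.
have : x \in [seq q <- iota a l | prime q] by rewrite E mem_head.
by rewrite mem_filter; case: x {E}.
Qed.

Definition first_prime_tm :=
  tRec (tV 1) tZ (tIfz (tV 1)
    (tIfz (tApp1 prime_tm (tAdd (tV 2) (tV 0))) tZ (tAdd (tV 2) (tV 0))) (tV 1)).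
Lemma sem_first_prime_tm a l : sem first_prime_tm [:: a; l] = first_prime a l.
Proof.
pose step k z := if z is 0 then (if prime (a + k) then a + k else 0) else z.
rewrite /= (@eq_iteri _ _ step) => [|k [|z]]; rewrite ?sem_tIfz //=.
  by elim: l => [|l IH] //; rewrite iteriS IH first_primeS.
by rewrite sem_tAdd /= sem_prime_tm /step; case: prime; rewrite //= sem_tAdd.
Qed.
Lemma wf_first_prime_tm h : wf h 2 first_prime_tm.
Proof. by rewrite /first_prime_tm; solve_wf. Qed.
#[local] Hint Resolve wf_first_prime_tm : core.
Opaque first_prime_tm.

Definition nth_prime_tm :=
  tRec (tV 0) (tS tOne)
    (tApp2 first_prime_tm (tS (tV 1)) (tApp1 fact_tm (tV 1))).
Lemma sem_nth_prime_tm i : sem nth_prime_tm [:: i] = nth_prime i.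
Proof.
rewrite /= (@eq_iteri _ _ (fun _ => next_prime)) => [|k z].
  by elim: i => [|i IH] //; rewrite iteriS IH.
by rewrite /= sem_fact_tm sem_first_prime_tm.
Qed.
Lemma wf_nth_prime_tm h : wf h 1 nth_prime_tm.
Proof. by rewrite /nth_prime_tm; solve_wf. Qed.
#[local] Hint Resolve wf_nth_prime_tm : core.
Opaque nth_prime_tm.

Lemma next_prime_spec p : 1 < p -> prime (next_prime p) /\ p < next_prime p.
Proof.
move=> p_gt1; set q := pdiv p`!.+1.
have fact_gt1 : 1 < p`!.+1 by rewrite ltnS fact_gt0.
have pr_q : prime q := pdiv_prime fact_gt1.
(* Euclid: q divides p! + 1, so no prime up to p does *)
have ltpq : p < q.
  rewrite ltnNge; apply/negP => qp.
  have : q %| p`! + 1 by rewrite addn1 pdiv_dvd.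
  rewrite dvdn_addr ?dvdn_fact ?prime_gt0 // dvdn1 => /eqP q1.
  by rewrite q1 in pr_q.
have : q \in [seq x <- iota p.+1 p`! | prime x].
  rewrite mem_filter pr_q mem_iota ltpq /=.
  apply: (leq_ltn_trans (pdiv_leq (ltnW fact_gt1))).
  by rewrite addSn ltnS -addn1 addnC leq_add2r ltnW.
rewrite /next_prime; case E: [seq x <- _ | _] => [|x s] // _ /=.
have : x \in [seq x <- iota p.+1 p`! | prime x] by rewrite E mem_head.
by rewrite mem_filter mem_iota => /andP [-> /andP [lx _]].
Qed.

Lemma nth_prime_spec i : prime (nth_prime i) /\ 1 < nth_prime i.
Proof.
elim: i => [|i [_ gt1]] //=.
by have [pr lt] := next_prime_spec gt1; split; last exact: ltn_trans lt.
Qed.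

Lemma nth_prime_prime i : prime (nth_prime i).
Proof. by case: (nth_prime_spec i). Qed.

Lemma nth_prime_gt1 i : 1 < nth_prime i.
Proof. by case: (nth_prime_spec i). Qed.

Lemma nth_prime_lt : {homo nth_prime : i j / i < j}.
Proof.
apply: homo_ltn; first exact: ltn_trans.
by move=> i; case: (next_prime_spec (nth_prime_gt1 i)).
Qed.

Lemma eq_nth_prime i j : (nth_prime i == nth_prime j) = (i == j).
Proof.
case: (ltngtP i j) => [lt|lt|->]; rewrite ?eqxx //; apply/negbTE.
  by rewrite neq_ltn nth_prime_lt.
by rewrite neq_ltn (nth_prime_lt lt) orbT.
Qed.

(** * Decoding canonical indices *)

Lemma sum_nat_ltn L m : \sum_(0 <= k < m) (k < L : nat) = minn L m.
Proof.
elim: m => [|m IH]; first by rewrite big_geq // minn0.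
by rewrite big_nat_recr //= IH; case: (ltnP m L) => ?; lia.
Qed.

Lemma logn_prod p n (F : nat -> nat) : (forall i, 0 < F i) ->
  logn p (\prod_(i < n) F i) = \sum_(i < n) logn p (F i).
Proof.
move=> F_gt0; elim: n => [|n IH]; first by rewrite !big_ord0 logn1.
by rewrite !big_ord_recr /= lognM ?IH ?F_gt0 ?prodn_gt0.
Qed.

Lemma canon_index_gt0 s : 0 < canon_index s.
Proof. by apply: prodn_gt0 => i; rewrite expn_gt0 prime_gt0 ?nth_prime_prime. Qed.

Lemma logn_canon_index s k : logn (nth_prime k) (canon_index s) = nth 0 s k.
Proof.
rewrite /canon_index (@logn_prod _ _ (fun i => nth_prime i ^ nth 0 s i)) => [|i];
  last by rewrite expn_gt0 prime_gt0 ?nth_prime_prime.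
under eq_bigr => i _ do
  rewrite lognX logn_prime ?nth_prime_prime // eq_nth_prime.
case: (ltnP k (size s)) => ks.
  rewrite (bigD1 (Ordinal ks)) //= eqxx muln1 big1 ?addn0 // => i.
  by rewrite -val_eqE /= eq_sym => /negbTE ->; rewrite muln0.
rewrite nth_default // big1 // => i _.
have /negbTE -> : k != i by rewrite neq_ltn (leq_trans (ltn_ord i) ks) orbT.
by rewrite muln0.
Qed.

Lemma sorted_ltn_leq_nth s j : sorted ltn s -> j < size s -> j <= nth 0 s j.
Proof.
move=> /(sortedP 0) lt_s; elim: j => [|j IH] // js.
by apply: leq_trans (lt_s j js); rewrite ltnS IH // ltnW.
Qed.

Lemma nth_prime_dvd_canon_index s j :
  sorted ltn s -> (nth_prime j.+1 %| canon_index s) = (j.+1 < size s).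
Proof.
move=> s_sorted; rewrite -[X in X %| _]expn1 pfactor_dvdn ?nth_prime_prime //.
  rewrite logn_canon_index; case: (ltnP j.+1 (size s)) => [js|js].
    exact: leq_trans (sorted_ltn_leq_nth s_sorted js).
  by rewrite nth_default.
exact: canon_index_gt0.
Qed.

(* One plus the number of i < m such that nth_prime 1, ..., nth_prime i.+1
   all divide m: it recovers [size s] from [canon_index s] because all
   entries of a strictly increasing s after the first are positive. *)
Definition canon_size m :=
  (\sum_(0 <= i < m) all (fun j => nth_prime j.+1 %| m) (iota 0 i.+1)).+1.

(* Since [canon_index [::] = canon_index [:: 0] = 1], decoding cannot recover
   the empty set; [decode m] is never empty. *)
Definition decode m := mkseq (fun i => logn (nth_prime i) m) (canon_size m).

Arguments canon_size : simpl never.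
Arguments decode : simpl never.

Lemma size_decode m : size (decode m) = canon_size m.
Proof. exact: size_mkseq. Qed.

Lemma canon_size_canon_index s :
  sorted ltn s -> s != [::] -> canon_size (canon_index s) = size s.
Proof.
move=> s_sorted; case def_s: s => [|x s'] // _; rewrite -def_s.
have size_s : size s = (size s').+1 by rewrite def_s.
rewrite /canon_size size_s; congr S.
under eq_bigr => i _.
  have -> : all (fun j => nth_prime j.+1 %| canon_index s) (iota 0 i.+1) = (i < size s').
    rewrite (eq_all (a2 := fun j => j.+1 < size s)) => [|j]; last first.
      exact: nth_prime_dvd_canon_index.
    apply/allP/idP => [all_lt|lt_i j].
      by have := all_lt i; rewrite mem_iota add0n ltnSn size_s ltnS; apply.
    by rewrite mem_iota add0n size_s ltnS ltnS => /andP [_ /leq_ltn_trans]; apply.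
  over.
rewrite sum_nat_ltn; apply/minn_idPl/ltnW.
have last_s : size s' < size s by rewrite size_s.
apply: (leq_ltn_trans (sorted_ltn_leq_nth s_sorted last_s)).
apply: (leq_trans (ltn_expl _ (nth_prime_gt1 (size s')))).
apply: dvdn_leq; first exact: canon_index_gt0.
by rewrite pfactor_dvdn ?nth_prime_prime ?canon_index_gt0 // logn_canon_index.
Qed.

Lemma decode_canon_index s :
  sorted ltn s -> s != [::] -> decode (canon_index s) = s.
Proof.
move=> s_sorted s_nil; rewrite /decode canon_size_canon_index //.
by rewrite (eq_mkseq (g := nth 0 s)) ?mkseq_nth // => i; exact: logn_canon_index.
Qed.

Lemma mem_decode_leq v m : v \in decode m -> v <= m.
Proof.
case/mapP => i _ ->; case: m => [|m]; first by rewrite logn0.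
exact/ltnW/ltn_logl.
Qed.

Lemma is_D_decode m s : is_D m s -> s != [::] -> decode m = s.
Proof. by case=> s_sorted <-; exact: decode_canon_index. Qed.

Definition is_code M := sorted ltn (decode M) && (canon_index (decode M) == M).

Lemma is_code_is_D M : is_code M -> is_D M (decode M).
Proof. by case/andP => s_sorted /eqP. Qed.

Lemma is_code_canon_index s : sorted ltn s -> s != [::] -> is_code (canon_index s).
Proof. by move=> s_sorted s_nil; rewrite /is_code decode_canon_index // s_sorted eqxx. Qed.

Lemma logn_count p m : prime p -> \sum_(0 <= k < m) (p ^ k.+1 %| m : nat) = logn p m.
Proof.
move=> pr_p; case: m => [|m]; first by rewrite big_geq // logn0.
rewrite (eq_bigr (fun k => (k < logn p m.+1 : nat))) => [|k _];
  last by rewrite pfactor_dvdn.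
by rewrite sum_nat_ltn; apply/minn_idPl/ltnW/ltn_logl.
Qed.

Definition logn_tm :=
  tSum (tV 1) (tApp2 dvd_tm (tApp2 pow_tm (tV 1) (tS (tV 0))) (tV 2)).
Lemma sem_logn_tm p m : prime p -> sem logn_tm [:: p; m] = logn p m.
Proof.
move=> pr_p; rewrite -logn_count //=.
by apply: eq_bigr => k _; rewrite sem_dvd_tm sem_pow_tm.
Qed.
Lemma wf_logn_tm h : wf h 2 logn_tm.
Proof. by rewrite /logn_tm; solve_wf. Qed.
#[local] Hint Resolve wf_logn_tm : core.
Opaque logn_tm.

Definition tCanonNth m i := tApp2 logn_tm (tApp1 nth_prime_tm i) m.
Lemma sem_tCanonNth m i e :
  sem (tCanonNth m i) e = logn (nth_prime (sem i e)) (sem m e).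
Proof. by rewrite /= sem_nth_prime_tm sem_logn_tm ?nth_prime_prime. Qed.
Lemma wf_tCanonNth h K m i : wf h K m -> wf h K i -> wf h K (tCanonNth m i).
Proof. by move=> wm wi; rewrite /tCanonNth; solve_wf. Qed.
Opaque tCanonNth.

Definition canon_size_tm :=
  tS (tSum (tV 0) (tAll (tS (tV 0))
    (tApp2 dvd_tm (tApp1 nth_prime_tm (tS (tV 0))) (tV 2)))).
Lemma sem_canon_size_tm m : sem canon_size_tm [:: m] = canon_size m.
Proof.
rewrite /= /canon_size; congr S; apply: eq_bigr => i _.
rewrite (@sem_tAll _ _ _ (fun j => nth_prime j.+1 %| m)) // => j.
by rewrite /= sem_dvd_tm sem_nth_prime_tm.
Qed.
Lemma wf_canon_size_tm h : wf h 1 canon_size_tm.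
Proof. by rewrite /canon_size_tm; solve_wf. Qed.
#[local] Hint Resolve wf_canon_size_tm : core.
Opaque canon_size_tm.

Lemma has_decode (P : pred nat) m :
  has P (decode m) = has (fun i => P (logn (nth_prime i) m)) (iota 0 (canon_size m)).
Proof. by rewrite has_map. Qed.

Lemma sorted_map_iota (r : rel nat) (f : nat -> nat) m n :
  sorted r (map f (iota m n)) = all (fun i => r (f i) (f i.+1)) (iota m n.-1).
Proof. by elim: n m => [|[|n] IH] m //=; rewrite -IH. Qed.

Lemma canon_index_decode M :
  canon_index (decode M) =
  \prod_(0 <= i < canon_size M) nth_prime i ^ logn (nth_prime i) M.
Proof.
rewrite /canon_index size_decode big_mkord.
by apply: eq_bigr => i _; rewrite nth_mkseq.
Qed.

Definition is_code_tm :=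
  tAnd (tAll (tPred (tApp1 canon_size_tm (tV 0)))
             (tLt (tCanonNth (tV 1) (tV 0)) (tCanonNth (tV 1) (tS (tV 0)))))
       (tEq (tProd (tApp1 canon_size_tm (tV 0))
                   (tApp2 pow_tm (tApp1 nth_prime_tm (tV 0)) (tCanonNth (tV 1) (tV 0))))
            (tV 0)).
Lemma sem_is_code_tm M : sem is_code_tm [:: M] = is_code M.
Proof.
rewrite /is_code /decode /mkseq sorted_map_iota -/(mkseq _ _) -/(decode M).
apply: sem_tAnd.
  rewrite (@sem_tAll _ _ _ (fun i => logn (nth_prime i) M < logn (nth_prime i.+1) M)).
    by rewrite sem_tPred /= sem_canon_size_tm.
  by move=> i; rewrite sem_tLt !sem_tCanonNth.
rewrite sem_tEq canon_index_decode /= sem_canon_size_tm; congr (_ == _).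
by apply: eq_bigr => i _; rewrite sem_pow_tm sem_nth_prime_tm sem_tCanonNth.
Qed.
Lemma wf_is_code_tm h : wf h 1 is_code_tm.
Proof. by rewrite /is_code_tm; solve_wf; apply: wf_tCanonNth. Qed.
#[local] Hint Resolve wf_is_code_tm : core.
Opaque is_code_tm.

Definition mem_decode_tm :=
  tEx (tApp1 canon_size_tm (tV 1)) (tEq (tCanonNth (tV 2) (tV 0)) (tV 1)).
Lemma sem_mem_decode_tm v m : sem mem_decode_tm [:: v; m] = (v \in decode m).
Proof.
rewrite -has_pred1 has_decode (@sem_tEx _ _ _ (fun i => logn (nth_prime i) m == v)).
  by rewrite /= sem_canon_size_tm.
by move=> i; rewrite sem_tEq sem_tCanonNth.
Qed.
Lemma wf_mem_decode_tm h : wf h 2 mem_decode_tm.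
Proof. by rewrite /mem_decode_tm; solve_wf; apply: wf_tCanonNth. Qed.
#[local] Hint Resolve wf_mem_decode_tm : core.
Opaque mem_decode_tm.

(** * Unions of traces *)

Definition bounded_union (l : seq nat) (B : nat) : seq nat :=
  flatten [seq decode m | m <- l & canon_size m <= B].

Lemma bounded_union_cons m l B : bounded_union (m :: l) B =
  if canon_size m <= B then decode m ++ bounded_union l B else bounded_union l B.
Proof. by rewrite /bounded_union /=; case: ifP. Qed.

Lemma mem_bounded_union v l B :
  (v \in bounded_union l B) = has (fun m => (canon_size m <= B) && (v \in decode m)) l.
Proof.
elim: l => [|m l IH] //; rewrite bounded_union_cons [RHS]/=.
by case: (canon_size m <= B); rewrite ?mem_cat IH.
Qed.

Lemma size_bounded_union l B : size (bounded_union l B) <= size l * B.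
Proof.
elim: l => [|m l IH] //; rewrite bounded_union_cons mulSn.
case: ifP => size_m; first by rewrite size_cat size_decode leq_add.
exact: leq_trans IH (leq_addl _ _).
Qed.

Definition union_mem_tm :=
  tEx (tApp1 canon_size_tm (tV 1))
      (tAnd (tLe (tApp1 canon_size_tm (tCanonNth (tV 2) (tV 0))) (tV 3))
            (tApp2 mem_decode_tm (tV 1) (tCanonNth (tV 2) (tV 0)))).
Lemma sem_union_mem_tm v R B :
  sem union_mem_tm [:: v; R; B] = (v \in bounded_union (decode R) B).
Proof.
rewrite mem_bounded_union has_decode.
rewrite (@sem_tEx _ _ _ (fun i => (canon_size (logn (nth_prime i) R) <= B)
                                  && (v \in decode (logn (nth_prime i) R)))).
  by rewrite /= sem_canon_size_tm.
move=> i; apply: sem_tAnd; first by rewrite sem_tLe /= sem_tCanonNth sem_canon_size_tm.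
by rewrite /= sem_tCanonNth sem_mem_decode_tm.
Qed.
Lemma wf_union_mem_tm h : wf h 3 union_mem_tm.
Proof. by rewrite /union_mem_tm; solve_wf; apply: wf_tCanonNth. Qed.
#[local] Hint Resolve wf_union_mem_tm : core.
Opaque union_mem_tm.

(* Testing v <= M + R suffices: elements of [decode M] are at most M and
   those of the union at most R. *)
Definition codes_union M R B :=
  is_code M && all (fun v => (v \in decode M) == (v \in bounded_union (decode R) B))
                   (iota 0 (M + R).+1).

Lemma codes_union_exists R B v :
  v \in bounded_union (decode R) B -> exists M, codes_union M R B.
Proof.
move=> v_in; set S := sort leq (undup (bounded_union (decode R) B)).
have S_sorted : sorted ltn S.
  by rewrite ltn_sorted_uniq_leq sort_uniq undup_uniq sort_sorted //; exact: leq_total.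
have S_nil : S != [::].
  by apply: contraTneq v_in => S0; rewrite -mem_undup -(mem_sort leq) -/S S0.
exists (canon_index S); rewrite /codes_union is_code_canon_index //.
by apply/allP => w _; rewrite decode_canon_index // mem_sort mem_undup.
Qed.

Lemma codes_union_decode M R B :
  codes_union M R B -> decode M =i bounded_union (decode R) B.
Proof.
case/andP => _ /allP same v; case: (leqP v (M + R)) => [v_le|v_gt].
  by apply/eqP/same; rewrite mem_iota ltnS.
have [v_M|v_M] := boolP (v \in decode M).
  by have := mem_decode_leq v_M; lia.
apply/esym/negbTE; rewrite mem_bounded_union; apply/hasP => -[m m_R /andP [_ v_m]].
by have := mem_decode_leq v_m; have := mem_decode_leq m_R; lia.
Qed.

Definition codes_union_tm :=
  tAnd (tApp1 is_code_tm (tV 0))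
       (tAll (tS (tAdd (tV 0) (tV 1)))
             (tEq (tApp2 mem_decode_tm (tV 0) (tV 1))
                  (tApp3 union_mem_tm (tV 0) (tV 2) (tV 3)))).
Lemma sem_codes_union_tm M R B : sem codes_union_tm [:: M; R; B] = codes_union M R B.
Proof.
apply: sem_tAnd; first exact: sem_is_code_tm.
rewrite (@sem_tAll _ _ _ (fun v => (v \in decode M) == (v \in bounded_union (decode R) B))).
  by rewrite /= sem_tAdd.
move=> v; rewrite sem_tEq /= sem_mem_decode_tm sem_union_mem_tm.
by case: (_ \in _); case: (_ \in _).
Qed.
Lemma wf_codes_union_tm h : wf h 3 codes_union_tm.
Proof. by rewrite /codes_union_tm; solve_wf. Qed.
#[local] Hint Resolve wf_codes_union_tm : core.
Opaque codes_union_tm.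

Lemma codes_union_size M R B :
  codes_union M R B -> size (decode M) <= canon_size R * B.
Proof.
move=> codesM; have /andP [/is_code_is_D [M_sorted _] _] := codesM.
rewrite -size_decode; apply: leq_trans (size_bounded_union _ _).
apply: uniq_leq_size; first by move: M_sorted; rewrite ltn_sorted_uniq_leq => /andP [].
by move=> v; rewrite (codes_union_decode codesM).
Qed.

Lemma trace_bounded_union x m R B s sR :
  is_D m s -> size s <= B -> x \in s -> is_D R sR -> m \in sR ->
  x \in bounded_union (decode R) B.
Proof.
move=> Ds size_s x_s DR m_R.
have nil_s : s != [::] by apply: contraTneq x_s => ->.
have nil_R : sR != [::] by apply: contraTneq m_R => ->.
rewrite mem_bounded_union (is_D_decode DR nil_R); apply/hasP; exists m => //.
by rewrite -size_decode (is_D_decode Ds nil_s) size_s.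
Qed.

(** * Square roots of orders *)

Definition isqrt x := \sum_(0 <= j < x) (j.+1 * j.+1 <= x : nat).

Lemma leq_isqrt k x : (k <= isqrt x) = (k * k <= x).
Proof.
have sq_bound m : m * m <= x -> m <= x.
  by case: m => // m; apply: leq_trans; rewrite leq_pmulr.
case: (@ex_maxnP (fun m => m * m <= x) x (ex_intro _ 0 isT) sq_bound) => L sqL maxL.
have sqE m : (m * m <= x) = (m <= L).
  by apply/idP/idP => [/maxL //|le_mL]; exact: leq_trans (leq_mul le_mL le_mL) sqL.
have -> : isqrt x = L.
  rewrite /isqrt (eq_bigr (fun j => (j < L : nat))) => [|j _]; last by rewrite sqE.
  by rewrite sum_nat_ltn; apply/minn_idPl/sq_bound.
by rewrite sqE.
Qed.

Definition isqrt_tm := tSum (tV 0) (tLe (tMul (tS (tV 0)) (tS (tV 0))) (tV 1)).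
Lemma sem_isqrt_tm x : sem isqrt_tm [:: x] = isqrt x.
Proof. by rewrite /=; apply: eq_bigr => j _; rewrite sem_tLe sem_tMul. Qed.
Lemma wf_isqrt_tm h : wf h 1 isqrt_tm.
Proof. by rewrite /isqrt_tm; solve_wf. Qed.
#[local] Hint Resolve wf_isqrt_tm : core.
Opaque isqrt_tm.

Definition order (phi : nat -> nat) : Prop :=
  [/\ computable phi, forall n, 1 <= phi n,
      forall m n, m <= n -> phi m <= phi n & forall b, exists n, b < phi n].

Lemma order_isqrt phi : order phi -> order (fun n => isqrt (phi n)).
Proof.
case=> [[c comp_c] phi_ge1 phi_mono phi_unb]; split.
- apply: (comp_rel_sem (t := tApp1 isqrt_tm (tExt c phi (tV 0)))) => [|n].
    by do !split.
  by rewrite /= sem_isqrt_tm.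
- by move=> n; rewrite leq_isqrt phi_ge1.
- move=> m n le_mn; rewrite leq_isqrt; apply: leq_trans (phi_mono _ _ le_mn).
  by rewrite -leq_isqrt.
- by move=> b; have [n lt_n] := phi_unb (b.+1 * b.+1); exists n; rewrite leq_isqrt ltnW.
Qed.

(** * Traces *)

Fixpoint drop_oracle (c : code) : code :=
  match c with
  | cOrc => cZero
  | cComp f gs => cComp (drop_oracle f) (map drop_oracle gs)
  | cRec b s => cRec (drop_oracle b) (drop_oracle s)
  | cMu f => cMu (drop_oracle f)
  | c => c
  end.

(* A proof term: the premise of [eMu] hides subderivations under an
   existential, out of reach of the induction principle of [eval]. *)
Fixpoint eval_drop_oracle h c args y (H : eval (fun _ => 0) c args y) {struct H}
  : eval h (drop_oracle c) args y :=
  match H in eval _ c args y return eval h (drop_oracle c) args y with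
  | eZero a => eZero h a
  | eSucc a => eSucc h a
  | eProj i a => eProj h i a
  | eOrc a => eZero h a
  | eComp f gs a ys y' H1 H2 => eComp (evals_drop_oracle h H1) (eval_drop_oracle h H2)
  | eRec0 b s r y' H1 => eRec0 (drop_oracle s) (eval_drop_oracle h H1)
  | eRecS b s n r z y' H1 H2 => eRecS (eval_drop_oracle h H1) (eval_drop_oracle h H2)
  | eMu f a y' H1 H2 => eMu (eval_drop_oracle h H1)
      (fun z Hz => let: ex_intro v Hv := H2 z Hz in ex_intro _ v (eval_drop_oracle h Hv))
  end
with evals_drop_oracle h gs args ys (H : evals (fun _ => 0) gs args ys) {struct H}
  : evals h (map drop_oracle gs) args ys :=
  match H in evals _ gs args ys return evals h (map drop_oracle gs) args ys with
  | esNil a => esNil h a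
  | esCons g gs a y ys H1 H2 => esCons (eval_drop_oracle h H1) (evals_drop_oracle h H2)
  end.

Lemma computable_comp_rel h F : computable F -> comp_rel h F.
Proof. by case=> c comp_c; exists (drop_oracle c) => n; apply: eval_drop_oracle. Qed.

Lemma comp_rel_ex_minn h t (P : nat -> nat -> bool) (exP : forall n, exists y, P y n) :
  wf h 2 t -> (forall y n, sem t [:: y; n] = P y n) ->
  comp_rel h (fun n => ex_minn (exP n)).
Proof.
move=> wt semP.
have evalP y n : eval h (compile 2 (tNot t)) [:: y; n] (1 - P y n).
  by rewrite -semP -sem_tNot; apply: eval_compile => //; apply: wf_tNot.
exists (cMu (compile 2 (tNot t))) => n; case: ex_minnP => y Py min_y.
apply: eMu; first by have := evalP y n; rewrite Py.
move=> z lt_zy; exists 0; have := evalP z n.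
by case: (boolP (P z n)) => // Pz; have := min_y z Pz; rewrite leqNgt lt_zy.
Qed.

Definition is_trace (r phi g' : nat -> nat) : Prop :=
  forall n, exists s, is_D (r n) s /\ size s <= phi n /\ g' n \in s.

Lemma traceable_relP h g : traceable_rel h g <->
  forall phi, order phi -> forall g', turing_le g' g ->
    exists r, comp_rel h r /\ is_trace r phi g'.
Proof.
split=> [trace_g phi [? ? ? ?]|trace_g phi ? ? ? ?]; first exact: trace_g.
by apply: trace_g; split.
Qed.

Lemma compose_traces h (psi phi g' r r2 : nat -> nat) :
  comp_rel h psi -> comp_rel h r2 -> (forall n, psi n * psi n <= phi n) ->
  is_trace r psi g' -> is_trace r2 psi r ->
  exists r3, comp_rel h r3 /\ is_trace r3 phi g'.
Proof.
move=> [c_psi comp_psi] [c_r2 comp_r2] psi_sq trace_r trace_r2.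
have union_r2 n : g' n \in bounded_union (decode (r2 n)) (psi n).
  have [s [Ds [size_s g'_s]]] := trace_r n.
  have [s2 [Ds2 [_ r_s2]]] := trace_r2 n.
  exact: trace_bounded_union Ds size_s g'_s Ds2 r_s2.
have codes_r2 n := codes_union_exists (union_r2 n).
exists (fun n => ex_minn (codes_r2 n)); split.
  apply: (comp_rel_ex_minn
    (t := tApp3 codes_union_tm (tV 0) (tExt c_r2 r2 (tV 1)) (tExt c_psi psi (tV 1)))).
    by do !split.
  by move=> M n; rewrite /= sem_codes_union_tm.
move=> n; case: ex_minnP => M codesM _; exists (decode M).
split; first by case/andP: codesM => /is_code_is_D.
split; last by rewrite (codes_union_decode codesM).
apply: leq_trans (codes_union_size codesM) (leq_trans _ (psi_sq n)).
have [s2 [Ds2 [size_s2 r_s2]]] := trace_r2 n.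
rewrite -size_decode (is_D_decode Ds2) ?leq_mul2r ?size_s2 ?orbT //.
by apply: contraTneq r_s2 => ->.
Qed.

Theorem mainTheorem4 (f g : nat -> nat) :
  traceable f -> traceable_rel f g -> traceable g.
Proof.
move=> [h [comp_h /traceable_relP trace_f]] /traceable_relP trace_g.
exists h; split=> //; apply/traceable_relP => phi order_phi g' le_g'g.
have order_psi := order_isqrt order_phi.
have [r [comp_r trace_r]] := trace_g _ order_psi g' le_g'g.
have [r2 [comp_r2 trace_r2]] := trace_f _ order_psi r comp_r.
apply: (compose_traces _ comp_r2 _ trace_r trace_r2) => [|n].
  by case: order_psi => /computable_comp_rel.
by rewrite -leq_isqrt.
Qed.
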